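(* For $\sigma,\alpha,\beta,\nu>0$ define, for $x>0$, $$f(x;\sigma,\alpha,\beta,\nu)=\frac{\nu x^{\nu-1}}{\sigma^{\nu}\,\Gamma\left(\frac{\alpha+\nu}{\beta}\right)}\,\Gamma\left(\frac{\alpha}{\beta},\left(\frac{x}{\sigma}\right)^{\beta}\right).$$ If $\sigma_1,\sigma_2,\alpha_1,\alpha_2,\beta_1,\beta_2,\nu_1,\nu_2>0$ satisfy $f(x;\sigma_1,\alpha_1,\beta_1,\nu_1)=f(x;\sigma_2,\alpha_2,\beta_2,\nu_2)$ for all $x>0$, then $\sigma_1=\sigma_2$, $\alpha_1=\alpha_2$, $\beta_1=\beta_2$ and $\nu_1=\nu_2$.
   Context: $\Gamma(a,y)=\int_y^\infty t^{a-1}e^{-t}\,dt$ denotes the upper incomplete gamma function. $f(\cdot;\sigma,\alpha,\beta,\nu)$ is the density of the scaled flexible interpretable gamma (FIG) distribution. *)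

From HB Require Import structures.
From mathcomp Require Import all_boot all_order all_algebra.
From mathcomp Require Import all_classical all_reals all_analysis.
Set Implicit Arguments. Unset Strict Implicit. Unset Printing Implicit Defensive.
Import Order.TTheory GRing.Theory Num.Theory.
Import numFieldNormedType.Exports.
Local Open Scope classical_set_scope.
Local Open Scope ring_scope.

(* Upper incomplete gamma function
   Gamma(a, y) = int_y^oo t^(a-1) e^(-t) dt  (Lebesgue integral over ]y, +oo[;
   the integrand is nonnegative, so the integral is always defined in \bar R,
   and it is finite for a > 0, y >= 0). *)
Definition upper_gamma {R : realType} (a y : R) : R :=
  fine (\int[@lebesgue_measure R]_(t in `]y, +oo[%classic)
          ((t `^ (a - 1)) * expR (- t))%:E)%E.

Definition gamma_fun {R : realType} (a : R) : R := upper_gamma a 0.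

Definition fig_density {R : realType} (sigma alpha beta nu x : R) : R :=
  nu * x `^ (nu - 1) / (sigma `^ nu * gamma_fun ((alpha + nu) / beta))
  * upper_gamma (alpha / beta) ((x / sigma) `^ beta).

From HB Require Import structures.
From mathcomp Require Import all_boot all_order all_algebra.
From mathcomp Require Import all_classical all_reals all_analysis.
From mathcomp Require Import ring lra measurable_realfun.
Import Order.TTheory GRing.Theory Num.Theory.
Import numFieldNormedType.Exports.
Set Implicit Arguments. Unset Strict Implicit. Unset Printing Implicit Defensive.
Local Open Scope classical_set_scope.
Local Open Scope ring_scope.

(* Write [f(x) = D x ^ (nu - 1) G(p x ^ beta)] with [p = sigma ^ (- beta)] and
   [G = Gamma(alpha / beta, .)]. On ]0, 1] the factor [G(p x ^ beta)] stays between
   the positive constants [G(p)] and [G(0)], so comparing two equal densities near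
   [0] forces [nu1 = nu2]. Cancelling [x ^ (nu - 1)] and differentiating, with
   [G'(y) = - y ^ (alpha / beta - 1) exp (- y)], gives
   [K1 x ^ (alpha1 - 1) exp (- p1 x ^ beta1) = K2 x ^ (alpha2 - 1) exp (- p2 x ^ beta2)].
   The same argument near [0] gives [alpha1 = alpha2]; then
   [p1 x ^ beta1 - p2 x ^ beta2] is constant, which forces [beta1 = beta2] and
   [p1 = p2], hence [sigma1 = sigma2]. *)

Section PowerFunctions.
Variable R : realType.
Implicit Types x c m M : R.

Lemma powR_le1 x c : 0 < x <= 1 -> 0 <= c -> x `^ c <= 1.
Proof. by move=> x01 c0; rewrite -[leRHS](powRr0 x); exact: ger_powR. Qed.

Lemma exists_powR_lt c m : 0 < c -> 0 < m -> exists x, 0 < x <= 1 /\ x `^ c < m.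
Proof.
move=> c0 m0; have m2 : 0 < m / 2 by rewrite divr_gt0.
exists (Num.min 1 ((m / 2) `^ c^-1)); split.
  by rewrite ge_min lexx /= lt_min ltr01 /= powR_gt0.
apply: (@le_lt_trans _ _ (m / 2)); last by rewrite ltr_pdivrMr // ltr_pMr // ltr1n.
have {2}-> : m / 2 = ((m / 2) `^ c^-1) `^ c.
  by rewrite -powRrM mulVf ?gt_eqF // powRr1 // ltW.
apply: ge0_ler_powR; first exact: ltW.
- by rewrite qualifE /= le_min ler01 powR_ge0.
- by rewrite qualifE /= powR_ge0.
- by rewrite ge_min lexx orbT.
Qed.

Lemma powR_bounded_near0_eq0 c m M : 0 < m ->
  (forall x, 0 < x <= 1 -> m <= x `^ c <= M) -> c = 0.
Proof.
move=> m0 bnd.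
have M0 : 0 < M.
  have /andP[+ +] := bnd 1 (introT andP (conj ltr01 (lexx 1))).
  by move=> /(lt_le_trans m0) /lt_le_trans; apply.
case: (ltgtP c 0) => // c0.
- have [x [x01 xc]] := @exists_powR_lt (- c) (M^-1)
    ltac:(by rewrite oppr_gt0) ltac:(by rewrite invr_gt0).
  have x0 : 0 < x by case/andP: x01.
  have /andP[_] := bnd x x01.
  by rewrite -[c]opprK powRN leNgt -[M]invrK ltf_pV2 ?xc // qualifE /= ?invr_gt0 ?powR_gt0.
- have [x [x01 xc]] := exists_powR_lt c0 m0.
  by have /andP[+ _] := bnd x x01; rewrite leNgt xc.
Qed.

Lemma powR_exponent_eq_of_bounded (D1 D2 c1 c2 h1 h2 g1 g2 : R) (H1 H2 : R -> R) :
  0 < D1 -> 0 < D2 -> 0 < h1 -> 0 < h2 ->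
  (forall x, 0 < x <= 1 -> h1 <= H1 x <= g1) ->
  (forall x, 0 < x <= 1 -> h2 <= H2 x <= g2) ->
  (forall x, 0 < x -> D1 * x `^ c1 * H1 x = D2 * x `^ c2 * H2 x) ->
  c1 = c2.
Proof.
move=> D10 D20 h10 h20 bnd1 bnd2 E.
have g10 : 0 < g1.
  have /andP[+ +] := bnd1 1 (introT andP (conj ltr01 (lexx 1))).
  by move=> /(lt_le_trans h10) /lt_le_trans; apply.
apply/eqP; rewrite -subr_eq0; apply/eqP.
apply: (@powR_bounded_near0_eq0 _ (D2 * h2 / (D1 * g1)) (D2 * g2 / (D1 * h1))).
  by rewrite divr_gt0 ?mulr_gt0.
move=> x x01; have x0 : 0 < x by case/andP: x01.
have /andP[l1 u1] := bnd1 x x01; have /andP[l2 u2] := bnd2 x x01.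
have H10 : 0 < H1 x := lt_le_trans h10 l1.
have ratio : x `^ (c1 - c2) * (D1 * H1 x) = D2 * H2 x.
  have xc2 : 0 < x `^ c2 := powR_gt0 _ x0.
  apply: (@mulIf _ (x `^ c2)); first by rewrite gt_eqF.
  rewrite powRB ?(gt_eqF x0) ?implybT // -mulrA [D2 * _ * _]mulrAC -(E x x0).
  by field; rewrite gt_eqF.
move: (x `^ (c1 - c2)) (powR_gt0 (c1 - c2) x0) ratio => r r0 ratio.
have D2H2 : D2 * h2 <= D2 * H2 x <= D2 * g2 by rewrite !ler_pM2l // l2 u2.
apply/andP; split.
  rewrite ler_pdivrMr ?mulr_gt0 //.
  have : 0 <= r * D1 * (g1 - H1 x) by rewrite mulr_ge0 ?subr_ge0 // mulr_ge0 ?ltW.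
  nra.
rewrite ler_pdivlMr ?mulr_gt0 //.
have : 0 <= r * D1 * (H1 x - h1) by rewrite mulr_ge0 ?subr_ge0 // mulr_ge0 ?ltW.
nra.
Qed.

(* Evaluating at the points where [x ^ b2] is 1, 2 and 4: with [y = 2 ^ (b1 / b2)]
   one gets [p1 (y - 1) = p2] and [p1 y (y - 1) = 2 p2], whence [y = 2]. *)
Lemma powR_diff_const_inj (p1 p2 b1 b2 d : R) : 0 < p2 -> 0 < b2 ->
  (forall x, 0 < x -> p1 * x `^ b1 - p2 * x `^ b2 = d) -> b1 = b2 /\ p1 = p2.
Proof.
move=> p20 b20 E.
have at_root k : 0 < k -> p1 * k `^ (b1 / b2) - p2 * k = d.
  move=> k0; have := E (k `^ b2^-1) (powR_gt0 _ k0).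
  by rewrite -!powRrM mulVf ?gt_eqF // powRr1 ?(ltW k0) // [b2^-1 * b1]mulrC.
set y := 2 `^ (b1 / b2).
have E1 := at_root 1 ltr01; rewrite powR1 in E1.
have two0 : (0 : R) < 2 by rewrite ltr0n.
have E2 := at_root 2 two0.
have E4 := at_root (2 * 2) (mulr_gt0 two0 two0).
rewrite powRM // -/y in E2 E4.
have y2 : y = 2 by nra.
have b12 : b1 / b2 = 1.
  have /(congr1 (@ln R)) := y2; rewrite ln_powR => /eqP.
  rewrite -subr_eq0 -{2}[ln 2]mul1r -mulrBl mulf_eq0 (gt_eqF (ln_gt0 _)) ?ltr1n //.
  by rewrite orbF subr_eq0 => /eqP.
split; last by rewrite y2 in E2; lra.
by rewrite -[b1](@divfK _ b2) ?gt_eqF // b12 mul1r.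
Qed.

(* On ]0, 1] the factor [exp (- p x ^ b)] lies in [[exp (- p), 1]], so the powers
   of [x] must agree; taking logarithms, [p1 x ^ b1 - p2 x ^ b2] is then constant. *)
Lemma powR_expR_inj (K1 K2 A1 A2 p1 p2 b1 b2 : R) :
  0 < K1 -> 0 < K2 -> 0 < p1 -> 0 < p2 -> 0 < b1 -> 0 < b2 ->
  (forall x, 0 < x -> K1 * x `^ A1 * expR (- (p1 * x `^ b1)) =
                      K2 * x `^ A2 * expR (- (p2 * x `^ b2))) ->
  [/\ A1 = A2, b1 = b2 & p1 = p2].
Proof.
move=> K10 K20 p10 p20 b10 b20 E.
have exp_bounds p b : 0 < p -> 0 < b -> forall x, 0 < x <= 1 ->
    expR (- p) <= expR (- (p * x `^ b)) <= 1.
  move=> p0 b0 x x01; rewrite expR_le1 ler_expR lerN2 oppr_le0.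
  have := powR_le1 x01 (ltW b0); have := powR_ge0 x b.
  by move=> ? ?; apply/andP; split; nra.
have A12 : A1 = A2.
  by apply: (powR_exponent_eq_of_bounded K10 K20 _ _ (exp_bounds _ _ p10 b10)
    (exp_bounds _ _ p20 b20)); rewrite ?expR_gt0.
have D x : 0 < x -> p1 * x `^ b1 - p2 * x `^ b2 = ln K1 - ln K2.
  move=> x0; have := E x x0; rewrite A12 [K1 * _ * _]mulrAC [K2 * _ * _]mulrAC.
  move=> /(mulIf (lt0r_neq0 (powR_gt0 A2 x0))) /(congr1 (@ln R)).
  by rewrite !lnM ?posrE ?expR_gt0 // !expRK; lra.
by have [] := powR_diff_const_inj p20 b20 D.
Qed.

End PowerFunctions.

Section UpperGamma.
Variable R : realType.
Notation mu := (@lebesgue_measure R).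
Implicit Types a t y z : R.

Definition gamma_integrand (a t : R) : R := t `^ (a - 1) * expR (- t).

Lemma gamma_integrand_ge0 a t : 0 <= gamma_integrand a t.
Proof. by rewrite mulr_ge0 ?powR_ge0 ?expR_ge0. Qed.

Lemma measurable_gamma_integrand a (D : set R) :
  measurable_fun D (fun t => (gamma_integrand a t)%:E).
Proof.
apply/measurable_EFinP; apply: (@measurable_funS _ _ _ _ setT) => //.
apply: measurable_funM; first exact: measurable_powR.
by apply: measurableT_comp; [exact: measurable_expR | exact: oppr_measurable].
Qed.

Lemma derivable_gamma_integrand a t : 0 < t -> derivable (gamma_integrand a) t 1.
Proof.
move=> t0; apply: derivableM.
  by apply: derivable_powR; rewrite in_itv /= t0.
apply/derivable1_diffP/differentiable_comp; apply/derivable1_diffP.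
  exact: derivable_opp.
exact: derivable_expR.
Qed.

Lemma continuous_gamma_integrand a t : 0 < t -> {for t, continuous (gamma_integrand a)}.
Proof.
move=> t0; apply: differentiable_continuous.
by rewrite -derivable1_diffP; exact: derivable_gamma_integrand.
Qed.

(* Since [t ^ c <= (2 c) ^ c exp (t / 2)], the tail is dominated by the
   density of the exponential law of rate [1/2]. *)
Lemma gamma_integrand_le_exponential_pdf a t : 1 <= t ->
  gamma_integrand a t <=
  (2 * (2 * (`|a - 1| + 1)) `^ (`|a - 1| + 1)) * exponential_pdf (2^-1) t.
Proof.
move=> t1; set c := `|a - 1| + 1.
have c0 : 0 < c by rewrite ltr_wpDl // normr_ge0.
have t0 : 0 < t := lt_le_trans ltr01 t1.
rewrite /gamma_integrand exponential_pdfE ?(ltW t0) //.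
have powc : t `^ (a - 1) <= t `^ c.
  by apply: ler_powR => //; rewrite (le_trans (ler_norm _)) // lerDl.
have scale : t `^ c = (2 * c) `^ c * (t / (2 * c)) `^ c.
  have c2 : 0 < 2 * c by rewrite mulr_gt0.
  rewrite -powRM ?(ltW c2) ?divr_ge0 ?(ltW t0) ?(ltW c2) //.
  by congr (_ `^ _); field; rewrite gt_eqF.
have exp_dom : (t / (2 * c)) `^ c <= expR (t / 2).
  have -> : t / 2 = (t / (2 * c)) * c by field; rewrite gt_eqF.
  rewrite expRM; apply: ge0_ler_powR; first exact: ltW.
  - by rewrite qualifE /= divr_ge0 ?mulr_ge0 ?ltW.
  - by rewrite qualifE /= expR_ge0.
  - by apply: le_trans (expR_ge1Dx _); lra.
have half : expR (t / 2) * expR (- t) = expR (- 2^-1 * t).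
  by rewrite -expRD; congr expR; field.
apply: (@le_trans _ _ ((2 * c) `^ c * expR (t / 2) * expR (- t))).
  rewrite ler_pM2r ?expR_gt0 //; apply: (le_trans powc).
  by rewrite scale ler_pM ?powR_ge0.
rewrite -mulrA half le_eqVlt; apply/orP; left; apply/eqP.
by field.
Qed.

Local Open Scope ereal_scope.

Lemma gamma_integral_gt1_lty a :
  \int[mu]_(t in `]1%R, +oo[) (gamma_integrand a t)%:E < +oo.
Proof.
set K := (2 * (2 * (`|a - 1| + 1)) `^ (`|a - 1| + 1))%R.
have K0 : (0 <= K)%R by rewrite mulr_ge0 ?powR_ge0.
have Kpdf_ge0 t : (0 <= K * exponential_pdf (2^-1) t)%R.
  by rewrite mulr_ge0 // exponential_pdf_ge0 // invr_ge0.
have mKpdf : measurable_fun [set: R] (fun t => (K * exponential_pdf (2^-1) t)%:E).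
  apply/measurable_EFinP; apply: measurable_funM; first exact: measurable_cst.
  exact: measurable_exponential_pdf.
apply: (@le_lt_trans _ _ (\int[mu]_(t in `]1%R, +oo[) (K * exponential_pdf (2^-1) t)%:E)).
  apply: ge0_le_integral => //.
  - by move=> t _; rewrite lee_fin gamma_integrand_ge0.
  - exact: measurable_gamma_integrand.
  - exact: measurable_funS mKpdf.
  - move=> t; rewrite /= in_itv /= => /andP[t1 _]; rewrite lee_fin.
    exact/gamma_integrand_le_exponential_pdf/ltW.
apply: (@le_lt_trans _ _ (\int[mu]_(t in [set: R]) (K * exponential_pdf (2^-1) t)%:E)).
  by apply: ge0_subset_integral => // t _; rewrite lee_fin.
under eq_integral do rewrite EFinM.
rewrite ge0_integralZl //; last first.
- by move=> t _; rewrite lee_fin exponential_pdf_ge0 // invr_ge0.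
- by apply/measurable_EFinP; exact: measurable_exponential_pdf.
by rewrite integral_exponential_pdf ?invr_gt0 // mule1 ltry.
Qed.

Lemma integral_powR_itv_le (a e : R) : (0 < a)%R -> (0 < e)%R -> (e < 1)%R ->
  \int[mu]_(t in `[e, 1%R]) (t `^ (a - 1))%:E <= (a^-1)%:E.
Proof.
move=> a0 e0 e1.
have F' (x : R) : (0 < x)%R -> is_derive x 1%R (fun t : R => a^-1 * t `^ a)%R (x `^ (a - 1))%R.
  move=> x0; apply: is_derive_eq; first exact: is_deriveZ (is_derive1_powR a x0).
  by rewrite /GRing.scale /= mulrA mulVf ?gt_eqF // mul1r.
have Fc (x : R) : (0 < x)%R -> {for x, continuous (fun t : R => a^-1 * t `^ a)%R}.
  move=> x0; apply: differentiable_continuous; rewrite -derivable1_diffP.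
  by have [] := F' x x0.
rewrite (@continuous_FTC2 _ _ (fun t : R => a^-1 * t `^ a)%R) //.
- rewrite powR1 -EFinB lee_fin mulr1 lerBlDr lerDl.
  by rewrite mulr_ge0 ?powR_ge0 // invr_ge0 ltW.
- apply: derivable_within_continuous => t; rewrite in_itv /= => /andP[et _].
  by apply: derivable_powR; rewrite in_itv /= andbT (lt_le_trans e0 et).
- split.
  + by move=> x; rewrite in_itv /= => /andP[ex _]; have [] := F' x (lt_trans e0 ex).
  + exact/cvg_at_right_filter/Fc.
  + exact/cvg_at_left_filter/Fc/(lt_trans e0).
- move=> x; rewrite in_itv /= => /andP[ex _].
  by rewrite derive1E; have [_ ->] := F' x (lt_trans e0 ex).
Qed.

(* Exhaust [ ]0, 1] ] by the segments [[1/(n+2), 1]] and use monotone convergence. *)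
Lemma gamma_integral_01_lty a : (0 < a)%R ->
  \int[mu]_(t in `]0%R, 1%R]) (gamma_integrand a t)%:E < +oo.
Proof.
move=> a0.
have mpow : measurable_fun [set: R] (fun t : R => (t `^ (a - 1))%:E).
  by apply/measurable_EFinP; exact: measurable_powR.
apply: (@le_lt_trans _ _ (\int[mu]_(t in `]0%R, 1%R]) (t `^ (a - 1))%:E)).
  apply: ge0_le_integral => //.
  - by move=> t _; rewrite lee_fin gamma_integrand_ge0.
  - exact: measurable_gamma_integrand.
  - exact: measurable_funS mpow.
  - move=> t; rewrite /= in_itv /= => /andP[t0 _]; rewrite lee_fin.
    by rewrite ler_piMr ?powR_ge0 // expR_le1 oppr_le0 ltW.
pose F n := `[((n.+2%:R)^-1 : R)%R, 1%R]%classic.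
have F_nd : {homo F : n m / (n <= m)%N >-> (n <= m)%O}.
  move=> n m nm; rewrite subsetEset /F => t /=; rewrite !in_itv /= => /andP[+ ->].
  by rewrite andbT; apply: le_trans; rewrite lef_pV2 ?posrE ?ler_nat ?ltr0n.
have F_cup : \bigcup_n F n = `]0%R, 1%R]%classic.
  apply/seteqP; split => t.
    move=> [n _]; rewrite /F /= !in_itv /= => /andP[+ ->].
    by rewrite andbT; apply: lt_le_trans; rewrite invr_gt0 ltr0n.
  rewrite /= in_itv /= => /andP[t0 t1].
  have [k] := ltr_add_invr t0; rewrite add0r => kt.
  exists k => //; rewrite /F /= in_itv /= t1 andbT; apply: le_trans (ltW kt).
  by rewrite lef_pV2 ?posrE ?ler_nat ?ltr0n.
have := @ge0_nondecreasing_set_cvg_integral _ (measurableTypeR R) R F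
  (fun t => (t `^ (a - 1))%:E) lebesgue_measure F_nd
  (fun=> measurable_itv _) (fun=> measurable_funS measurableT (subsetT _) mpow)
  (fun _ t _ => powR_ge0 _ _).
rewrite F_cup => cvg_int.
apply: (@le_lt_trans _ _ (a^-1)%:E); last exact: ltry.
apply: (cvge_to_le cvg_int); apply: nearW => n.
by apply: integral_powR_itv_le; rewrite ?invr_gt0 ?invf_lt1 ?ltr1n ?ltr0n.
Qed.

Lemma gamma_integral_itv_split a (y z : R) : (y < z)%R ->
  \int[mu]_(t in `]y, +oo[) (gamma_integrand a t)%:E =
  \int[mu]_(t in `]y, z]) (gamma_integrand a t)%:E +
  \int[mu]_(t in `]z, +oo[) (gamma_integrand a t)%:E.
Proof.
move=> yz; rewrite -ge0_integral_setU //.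
- congr integral; apply/seteqP; split => t /=; rewrite !in_itv /= ?andbT.
    by move=> yt; case: (leP t z) => tz; [left; rewrite yt | right].
  by case=> [/andP[]|] // zt; exact: lt_trans yz zt.
- exact: measurable_gamma_integrand.
- by move=> t _; rewrite lee_fin gamma_integrand_ge0.
- apply/disj_set2P/seteqP; split => t //=.
  by rewrite !in_itv /= andbT => -[/andP[_ tz] zt]; move: (lt_le_trans zt tz); rewrite ltxx.
Qed.

Lemma gamma_integral_lty a (y : R) : (0 < a)%R -> (0 <= y)%R ->
  \int[mu]_(t in `]y, +oo[) (gamma_integrand a t)%:E < +oo.
Proof.
move=> a0 y0.
apply: (@le_lt_trans _ _ (\int[mu]_(t in `]0%R, +oo[) (gamma_integrand a t)%:E)).
  apply: ge0_subset_integral => //.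
  - exact: measurable_gamma_integrand.
  - by move=> t _; rewrite lee_fin gamma_integrand_ge0.
  - by move=> t /=; rewrite !in_itv /= !andbT; apply: le_lt_trans.
rewrite (@gamma_integral_itv_split a 0 1) //.
by rewrite lte_add_pinfty ?gamma_integral_01_lty ?gamma_integral_gt1_lty.
Qed.

(* The integrand is at least [(y + 2) ^ (- |a - 1|) exp (- (y + 2))] on [[y + 1, y + 2]]. *)
Lemma gamma_integral_gt0 a (y : R) : (0 <= y)%R ->
  0 < \int[mu]_(t in `]y, +oo[) (gamma_integrand a t)%:E.
Proof.
move=> y0.
set m := (((y + 2) `^ `|a - 1|)^-1 * expR (- (y + 2)))%R.
have m0 : (0 < m)%R by rewrite mulr_gt0 ?invr_gt0 ?powR_gt0 ?expR_gt0 //; lra.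
apply: (@lt_le_trans _ _ (\int[mu]_(t in `[(y + 1)%R, (y + 2)%R]) (cst m%:E) t)).
  rewrite integral_cst //= lebesgue_measure_itv /= lte_fin.
  rewrite ifT; last by lra.
  by rewrite -EFinD mule_gt0 // lte_fin; lra.
apply: (@le_trans _ _ (\int[mu]_(t in `[(y + 1)%R, (y + 2)%R]) (gamma_integrand a t)%:E)).
  apply: ge0_le_integral => //.
  - by move=> t _; rewrite lee_fin ltW.
  - exact: measurable_gamma_integrand.
  - move=> t; rewrite /= in_itv /= => /andP[t1 t2]; rewrite lee_fin.
    have t0 : (1 <= t)%R by lra.
    apply: ler_pM; rewrite ?invr_ge0 ?powR_ge0 ?expR_ge0 //; last first.
      by rewrite ler_expR; lra.
    apply: (@le_trans _ _ (t `^ (- `|a - 1|))%R).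
      rewrite powRN lef_pV2 ?posrE ?powR_gt0 //; try lra.
      by apply: ge0_ler_powR => //; rewrite ?qualifE /=; lra.
    apply: ler_powR => //.
    by have := ler_norm (a - 1); have := ler_norm (- (a - 1)); rewrite normrN; lra.
apply: ge0_subset_integral => //.
- exact: measurable_gamma_integrand.
- by move=> t _; rewrite lee_fin gamma_integrand_ge0.
- by move=> t /=; rewrite !in_itv /= andbT => /andP[t1 _]; lra.
Qed.

Lemma upper_gammaE a (y : R) : (0 < a)%R -> (0 <= y)%R ->
  (upper_gamma a y)%:E = \int[mu]_(t in `]y, +oo[) (gamma_integrand a t)%:E.
Proof.
move=> a0 y0; rewrite /upper_gamma fineK // ge0_fin_numE ?gamma_integral_lty //.
by apply: integral_ge0 => t _; rewrite lee_fin gamma_integrand_ge0.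
Qed.

Local Close Scope ereal_scope.

Lemma upper_gamma_gt0 a y : 0 < a -> 0 <= y -> 0 < upper_gamma a y.
Proof. by move=> a0 y0; rewrite -lte_fin upper_gammaE ?gamma_integral_gt0. Qed.

Lemma le_upper_gamma a y z : 0 < a -> 0 <= y -> y <= z ->
  upper_gamma a z <= upper_gamma a y.
Proof.
move=> a0 y0 yz; rewrite -lee_fin !upper_gammaE ?(le_trans y0) //.
apply: ge0_subset_integral => //.
- exact: measurable_gamma_integrand.
- by move=> t _; rewrite lee_fin gamma_integrand_ge0.
- by move=> t /=; rewrite !in_itv /= !andbT; apply: le_lt_trans.
Qed.

(* Near [y], [upper_gamma a] is a constant minus the primitive
   [x |-> int_(y/2)^x gamma_integrand a] given by the first FTC. *)
Lemma is_derive_upper_gamma a y : 0 < a -> 0 < y ->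
  is_derive y 1 (upper_gamma a) (- gamma_integrand a y).
Proof.
move=> a0 y0; set c := y / 2.
have c0 : 0 < c by rewrite divr_gt0.
have cy : c < y by rewrite /c; lra.
have int_c : mu.-integrable `]c, y + 1] (EFin \o gamma_integrand a).
  apply: (@integrableS _ _ _ mu `[c, y + 1]) => //.
    by move=> t /=; rewrite !in_itv /= => /andP[/ltW -> ->].
  apply: continuous_compact_integrable; first exact: segment_compact.
  apply: derivable_within_continuous => t; rewrite in_itv /= => /andP[ct _].
  exact/derivable_gamma_integrand/(lt_le_trans c0).
have [dF F'] := @continuous_FTC1 R (gamma_integrand a) (BRight c) y (y + 1)
  ltac:(lra) int_c ltac:(by rewrite lte_fin) (@continuous_gamma_integrand a y y0).
set F := fun x => (\int[mu]_(t in [set` Interval (BRight c) (BRight x)]) gamma_integrand a t)%R.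
have derF : is_derive y 1 F (gamma_integrand a y).
  by have := derivableP dF; rewrite -derive1E F'.
have : is_derive y 1 (fun x => upper_gamma a c - F x) (0 - gamma_integrand a y).
  exact: is_deriveB.
rewrite sub0r; apply: near_eq_is_derive; near=> x.
have cx : c < x by near: x; exact: lt_nbhsr.
suff : (upper_gamma a c)%:E = (F x + upper_gamma a x)%:E by move=> [->]; lra.
have int_cx : (\int[mu]_(t in `]c, x]) (gamma_integrand a t)%:E)%E \is a fin_num.
  rewrite ge0_fin_numE; last first.
    by apply: integral_ge0 => t _; rewrite lee_fin gamma_integrand_ge0.
  apply: le_lt_trans (gamma_integral_lty a0 (ltW c0)).
  apply: ge0_subset_integral => //.
  - exact: measurable_gamma_integrand.
  - by move=> t _; rewrite lee_fin gamma_integrand_ge0.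
  - by move=> t /=; rewrite !in_itv /= andbT => /andP[].
rewrite EFinD !upper_gammaE ?(ltW c0) ?(ltW (lt_trans c0 cx)) //.
by rewrite (gamma_integral_itv_split _ cx) /F /Rintegral fineK.
Unshelve. all: by end_near.
Qed.

End UpperGamma.

Section FigDensity.
Variable R : realType.
Implicit Types s a b n p x : R.

Lemma fig_densityE s a b n x : 0 < s -> 0 < x ->
  fig_density s a b n x = n / (s `^ n * gamma_fun ((a + n) / b)) * x `^ (n - 1)
    * upper_gamma (a / b) (s^-1 `^ b * x `^ b).
Proof.
move=> s0 x0; rewrite /fig_density [n * _ / _]mulrAC.
by congr (_ * upper_gamma _ _); rewrite powRM ?invr_ge0 ?(ltW s0) ?(ltW x0) // mulrC.
Qed.

Lemma is_derive_upper_gamma_powR a p b x : 0 < a -> 0 < p -> 0 < b -> 0 < x ->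
  is_derive x 1 (fun x => upper_gamma (a / b) (p * x `^ b))
    (- (p `^ (a / b) * b * x `^ (a - 1) * expR (- (p * x `^ b)))).
Proof.
move=> a0 p0 b0 x0.
have ab0 : 0 < a / b by rewrite divr_gt0.
have inner : is_derive x 1 (fun x : R => p * x `^ b) (p * (b * x `^ (b - 1))).
  exact: is_deriveZ (is_derive1_powR b x0).
have pxb0 : 0 < p * x `^ b by rewrite mulr_gt0 ?powR_gt0.
have outer := is_derive_upper_gamma ab0 pxb0.
have chain_value : gamma_integrand (a / b) (p * x `^ b) * (p * (b * x `^ (b - 1))) =
    p `^ (a / b) * b * x `^ (a - 1) * expR (- (p * x `^ b)).
  rewrite /gamma_integrand powRM ?powR_ge0 ?(ltW p0) // -powRrM.
  have xa : x `^ (b * (a / b - 1)) * x `^ (b - 1) = x `^ (a - 1).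
    rewrite -powRD ?(gt_eqF x0) ?implybT //; congr (_ `^ _).
    by field; rewrite gt_eqF.
  rewrite -(mulr_powRB1 (ltW p0) ab0) -xa; ring.
apply: DeriveDef.
  apply/derivable1_diffP/differentiable_comp; apply/derivable1_diffP.
    by have [] := inner.
  by have [] := outer.
rewrite -derive1E (derive1_comp (f := fun x : R => p * x `^ b) (g := upper_gamma (a / b))).
- by rewrite !derive1E !derive_val -chain_value mulNr.
- by have [] := inner.
- by have [] := outer.
Qed.

Lemma upper_gamma_powR_bounds a p b x : 0 < a -> 0 < p -> 0 < b -> 0 < x <= 1 ->
  upper_gamma a p <= upper_gamma a (p * x `^ b) <= upper_gamma a 0.
Proof.
move=> a0 p0 b0 x01; have pxb0 : 0 <= p * x `^ b by rewrite mulr_ge0 ?powR_ge0 ?ltW.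
apply/andP; split; apply: le_upper_gamma => //.
by rewrite ler_piMr ?(powR_le1 x01) ?ltW.
Qed.

Lemma eq_is_derive_gt0 (f g : R -> R) x df dg :
  (forall y, 0 < y -> f y = g y) -> 0 < x ->
  is_derive x 1 f df -> is_derive x 1 g dg -> df = dg.
Proof.
move=> fg x0 derf derg.
have derg' : is_derive x 1 g df.
  by apply: near_eq_is_derive derf; near=> y; apply: fg; near: y; exact: lt_nbhsr.
by rewrite -(@derive_val _ _ _ _ _ _ _ derg') (@derive_val _ _ _ _ _ _ _ derg).
Unshelve. all: by end_near.
Qed.

Lemma fig_shape_inj D1 D2 p1 p2 a1 a2 b1 b2 n1 n2 :
  0 < D1 -> 0 < D2 -> 0 < p1 -> 0 < p2 -> 0 < a1 -> 0 < a2 -> 0 < b1 -> 0 < b2 ->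
  (forall x, 0 < x -> D1 * x `^ (n1 - 1) * upper_gamma (a1 / b1) (p1 * x `^ b1) =
                      D2 * x `^ (n2 - 1) * upper_gamma (a2 / b2) (p2 * x `^ b2)) ->
  [/\ n1 = n2, a1 = a2, b1 = b2 & p1 = p2].
Proof.
move=> D10 D20 p10 p20 a10 a20 b10 b20 E.
have ab10 : 0 < a1 / b1 by rewrite divr_gt0.
have ab20 : 0 < a2 / b2 by rewrite divr_gt0.
have n12 : n1 = n2.
  suff : n1 - 1 = n2 - 1 by lra.
  apply: (powR_exponent_eq_of_bounded D10 D20 _ _
    (fun x => upper_gamma_powR_bounds ab10 p10 b10)
    (fun x => upper_gamma_powR_bounds ab20 p20 b20) E);
  by rewrite upper_gamma_gt0 ?ltW.
subst n2.
have E' y : 0 < y -> D1 * upper_gamma (a1 / b1) (p1 * y `^ b1) =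
                    D2 * upper_gamma (a2 / b2) (p2 * y `^ b2).
  move=> y0; move: (E y y0); rewrite [D1 * _ * _]mulrAC [D2 * _ * _]mulrAC.
  exact/mulIf/lt0r_neq0/powR_gt0.
have key x : 0 < x ->
    D1 * (p1 `^ (a1 / b1) * b1) * x `^ (a1 - 1) * expR (- (p1 * x `^ b1)) =
    D2 * (p2 `^ (a2 / b2) * b2) * x `^ (a2 - 1) * expR (- (p2 * x `^ b2)).
  move=> x0; have := @eq_is_derive_gt0 _ _ x _ _ E' x0
    (is_deriveZ D1 (is_derive_upper_gamma_powR a10 p10 b10 x0))
    (is_deriveZ D2 (is_derive_upper_gamma_powR a20 p20 b20 x0)).
  by rewrite /GRing.scale /= !mulrN => /oppr_inj; rewrite !mulrA.
have [a12 -> ->] := powR_expR_inj (mulr_gt0 D10 (mulr_gt0 (powR_gt0 _ p10) b10))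
  (mulr_gt0 D20 (mulr_gt0 (powR_gt0 _ p20) b20)) p10 p20 b10 b20 key.
by split => //; lra.
Qed.

Lemma fig_constant_gt0 s a b n : 0 < s -> 0 < a -> 0 < b -> 0 < n ->
  0 < n / (s `^ n * gamma_fun ((a + n) / b)).
Proof.
move=> s0 a0 b0 n0.
by rewrite divr_gt0 ?mulr_gt0 ?powR_gt0 ?upper_gamma_gt0 ?divr_gt0 ?addr_gt0.
Qed.

End FigDensity.

Unset Implicit Arguments.

Theorem mainTheorem6 (R : realType)
  (s1 s2 a1 a2 b1 b2 n1 n2 : R)
  (hs1 : 0 < s1) (hs2 : 0 < s2) (ha1 : 0 < a1) (ha2 : 0 < a2)
  (hb1 : 0 < b1) (hb2 : 0 < b2) (hn1 : 0 < n1) (hn2 : 0 < n2) :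
  (forall x : R, 0 < x -> fig_density s1 a1 b1 n1 x = fig_density s2 a2 b2 n2 x) ->
  [/\ s1 = s2, a1 = a2, b1 = b2 & n1 = n2].
Proof.
move=> E.
have inv_powR_gt0 (s b : R) : 0 < s -> 0 < s^-1 `^ b by move=> s0; rewrite powR_gt0 ?invr_gt0.
have [n12 a12 b12 p12] := fig_shape_inj (fig_constant_gt0 hs1 ha1 hb1 hn1)
  (fig_constant_gt0 hs2 ha2 hb2 hn2)
  (inv_powR_gt0 _ b1 hs1) (inv_powR_gt0 _ b2 hs2) ha1 ha2 hb1 hb2
  (fun x x0 => etrans (esym (fig_densityE _ _ _ hs1 x0))
                      (etrans (E x x0) (fig_densityE _ _ _ hs2 x0))).
split => //; apply: invr_inj; subst b2.
by apply: (powR_injective hb1); rewrite ?qualifE /= ?invr_ge0 ?ltW.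
Qed.
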